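(* Let $t\in T_2$, let $\mathcal{T}_t$ be the variety defined by $t(x,y)=x$, let $A=X\mathcal{T}_t^{\,p}$ be the free $\mathcal{T}_t^{\,p}$-algebra over a set $X$, let $\varrho$ be the semilattice replica congruence of $A$, and let $\theta$ be any congruence of $A$. Then $\theta\vee\varrho=\theta\circ\varrho\circ\theta$.
   Context: $\Omega$-algebras are of a plural similarity type (no nullary operation symbols, at least one operation symbol of arity $\ge2$). $T_n$ is the set of $\Omega$-terms in $x_1,\dots,x_n$ in which all $n$ variables occur. An identity is regular if the same variables occur on both sides. $\mathcal{S}$ is the variety of $\Omega$-algebras satisfying all regular identities; the semilattice replica congruence $\varrho$ of $A$ is the smallest congruence with $A/\varrho\in\mathcal{S}$. $\circ$ denotes relational composition of congruences and $\vee$ their join. Prolongation: for an identity $\sigma$ of the form $u(y_1,\dots,y_n)=v(y_1,\dots,y_n)$ and $m\ge1$, $\sigma^p_m$ is the set of identities $u(r_1,\dots,r_n)=v(r_1,\dots,r_n)$ obtained by substituting $r_i(x_1,\dots,x_m)$ for $y_i$, with $r_i$ ranging over $T_m$; $\sigma^p=\bigcup_m\sigma^p_m$; $\Sigma^p=\bigcup_{\sigma\in\Sigma}\sigma^p$. $\mathcal{V}^p$ is the variety defined by $\mathrm{Id}(\mathcal{V})^p$, $\mathrm{Id}(\mathcal{V})$ being all identities of $\mathcal{V}$. *)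

From mathcomp Require Import all_boot.
Set Implicit Arguments. Unset Strict Implicit. Unset Printing Implicit Defensive.

Section UA.
Variables (Om : Type) (ar : Om -> nat).

Definition plural : Prop := (forall o, 0 < ar o) /\ (exists o, 1 < ar o).

Inductive term (V : Type) : Type :=
| Var : V -> term V
| Op : forall o : Om, ('I_(ar o) -> term V) -> term V.

Record algebra : Type := Algebra {
  carrier :> Type;
  op : forall o : Om, ('I_(ar o) -> carrier) -> carrier }.

Fixpoint eval (A : algebra) (V : Type) (e : V -> A) (u : term V) : A :=
  match u with
  | Var x => e x
  | Op o f => @op A o (fun i => eval e (f i))
  end.

Fixpoint subst (V W : Type) (s : V -> term W) (u : term V) : term W :=
  match u with
  | Var x => s x
  | Op o f => @Op W o (fun i => subst s (f i))
  end.

Fixpoint occurs (V : Type) (x : V) (u : term V) : Prop :=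
  match u with
  | Var y => x = y
  | Op o f => exists i, occurs x (f i)
  end.

Definition identity : Type := (term nat * term nat)%type.

Definition satisfies (A : algebra) (s : identity) : Prop :=
  forall e : nat -> A, eval e s.1 = eval e s.2.

Definition model (Sigma : identity -> Prop) (A : algebra) : Prop :=
  forall s, Sigma s -> satisfies A s.

Definition Id (Sigma : identity -> Prop) : identity -> Prop :=
  fun s => forall A : algebra, model Sigma A -> satisfies A s.

Definition in_T (m : nat) (u : term nat) : Prop :=
  (forall x, occurs x u -> x < m) /\ (forall x, x < m -> occurs x u).

Definition prolong (Sigma : identity -> Prop) : identity -> Prop :=
  fun s' => exists s, Sigma s /\
    exists m, 0 < m /\ exists r : nat -> term nat,
      (forall i, in_T m (r i)) /\ s' = (subst r s.1, subst r s.2).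

Definition regular (s : identity) : Prop :=
  forall x, occurs x s.1 <-> occurs x s.2.

Definition subrel (A : Type) (R S : A -> A -> Prop) : Prop :=
  forall x y, R x y -> S x y.

Definition congruence (A : algebra) (th : A -> A -> Prop) : Prop :=
  (forall x, th x x) /\ (forall x y, th x y -> th y x) /\
  (forall x y z, th x y -> th y z -> th x z) /\
  (forall o (a b : 'I_(ar o) -> A), (forall i, th (a i) (b i)) ->
     th (@op A o a) (@op A o b)).

(* A/th satisfies the identity s *)
Definition quot_satisfies (A : algebra) (th : A -> A -> Prop) (s : identity) :=
  forall e : nat -> A, th (eval e s.1) (eval e s.2).

Definition quot_in_S (A : algebra) (th : A -> A -> Prop) : Prop :=
  forall s, regular s -> quot_satisfies th s.

Definition semilattice_replica (A : algebra) (rho : A -> A -> Prop) : Prop :=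
  congruence rho /\ quot_in_S rho /\
  (forall phi, congruence phi -> quot_in_S phi -> subrel rho phi).

Definition cong_join (A : algebra) (th rho : A -> A -> Prop) : A -> A -> Prop :=
  fun x y => forall phi, congruence phi -> subrel th phi -> subrel rho phi ->
    phi x y.

Definition rel_comp (A : Type) (R S : A -> A -> Prop) : A -> A -> Prop :=
  fun x y => exists z, R x z /\ S z y.

Definition hom (A B : algebra) (h : A -> B) : Prop :=
  forall o (a : 'I_(ar o) -> A), h (@op A o a) = @op B o (fun i => h (a i)).

Definition free_over (Sigma : identity -> Prop) (X : Type) (A : algebra)
    (eta : X -> A) : Prop :=
  model Sigma A /\
  forall B : algebra, model Sigma B -> forall f : X -> B,
    exists h : A -> B, hom h /\ (forall x, h (eta x) = f x) /\
      (forall h' : A -> B, hom h' -> (forall x, h' (eta x) = f x) ->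
         forall a, h' a = h a).

End UA.

From HB Require Import structures.
From mathcomp Require Import all_boot.
From Stdlib Require Import FunctionalExtensionality PropExtensionality ClassicalEpsilon.
Set Implicit Arguments. Unset Strict Implicit.

(* Write [T a b] for the term operation [t(a, b)] of [A].  Two elements of the
   free algebra are [rho]-related only if they are built from the same set of
   generators, and for such [u, v] the prolongation of [t(x, y) = x] by
   substituting [u, v] gives [T u v = u]; moreover [T a b rho T b a] because
   [t(x, y) = t(y, x)] is regular.  With these two facts a chain
   [x theta p rho q theta p' rho q' theta y] collapses through
   [x theta T p p' rho T q q' rho T q' q theta y], so [theta o rho o theta] is
   transitive, hence a congruence, hence the join. *)

Definition pair_env (T : Type) (a b : T) : nat -> T :=
  fun n => if n is 0 then a else b.

(* Classically every type has decidable equality; this lets us enumerate the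
   variables of a term over an arbitrary set of generators. *)
Definition classical (X : Type) : Type := X.
Definition classical_eqb (X : Type) (x y : classical X) : bool :=
  if excluded_middle_informative (x = y) then true else false.
Lemma classical_eqbP (X : Type) : Equality.axiom (@classical_eqb X).
Proof.
by move=> x y; rewrite /classical_eqb; case: excluded_middle_informative; constructor.
Qed.
HB.instance Definition _ (X : Type) := hasDecEq.Build (classical X) (@classical_eqbP X).

Section UniversalAlgebra.
Variables (Om : Type) (ar : Om -> nat).
Implicit Types (A B : algebra ar).

Lemma eval_subst A V W (e : W -> A) (r : V -> term ar W) u :
  eval e (subst r u) = eval (fun y => eval e (r y)) u.
Proof.
elim: u => [v|o f IH] //=; congr op; apply: functional_extensionality => i; exact: IH.
Qed.

Lemma eval_hom A B (h : A -> B) V (e : V -> A) u :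
  hom h -> h (eval e u) = eval (fun y => h (e y)) u.
Proof.
move=> hh; elim: u => [v|o f IH] //=; rewrite hh; congr op.
apply: functional_extensionality => i; exact: IH.
Qed.

Lemma eq_eval A V (e e' : V -> A) u :
  (forall x, occurs x u -> e x = e' x) -> eval e u = eval e' u.
Proof.
elim: u => [v|o f IH] /= He; first exact: He.
congr op; apply: functional_extensionality => i; apply: IH => x Hx; apply: He; by exists i.
Qed.

Lemma eval_congruence A (th : A -> A -> Prop) V (e e' : V -> A) u :
  congruence th -> (forall x, th (e x) (e' x)) -> th (eval e u) (eval e' u).
Proof. by move=> [_ [_ [_ th_op]]] He; elim: u => [v|o f IH] //=; exact: th_op. Qed.

Lemma occurs_subst V W (r : V -> term ar W) u z :
  occurs z (subst r u) <-> exists y, occurs y u /\ occurs z (r y).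
Proof.
elim: u => [v|o f IH] /=.
  by split=> [Hz|[y [-> Hz]]]; first exists v.
split=> [[i /IH [y [Hy Hz]]]|[y [[i Hy] Hz]]].
  by exists y; split; first exists i.
by exists i; apply/IH; exists y.
Qed.

Lemma occurs_nonempty (Hpl : plural ar) V (u : term ar V) : exists x, occurs x u.
Proof.
elim: u => [v|o f IH] /=; first by exists v.
have [x Hx] := IH (Ordinal (Hpl.1 o)); exists x; by exists (Ordinal (Hpl.1 o)).
Qed.

Lemma regular_swap2 (t : term ar nat) :
  in_T 2 t -> regular (t, subst (pair_env (Var ar 1) (Var ar 0)) t).
Proof.
move=> [t_lt2 t_has] x /=; rewrite occurs_subst.
split=> [Hx|[[|y] [_ /= ->]]]; try exact: t_has.
have := t_lt2 x Hx; case: x Hx => [|[|x]] Hx // _; [exists 1 | exists 0].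
  all: by split; first exact: t_has.
Qed.

Definition union_algebra (X : Type) : algebra ar :=
  @Algebra _ ar (X -> Prop) (fun o f x => exists i, f i x).

Lemma eval_union X V (e : V -> union_algebra X) u :
  eval e u = (fun x => exists y, occurs y u /\ e y x).
Proof.
apply: functional_extensionality => x; apply: propositional_extensionality.
elim: u => [v|o f IH] /=.
  by split=> [Hx|[y [-> Hx]]]; first exists v.
split=> [[i /IH [y [Hy Hx]]]|[y [[i Hy] Hx]]].
  by exists y; split; first exists i.
by exists i; apply/IH; exists y.
Qed.

Lemma union_algebra_regular X s : regular s -> satisfies (union_algebra X) s.
Proof.
move=> Hs e; rewrite !eval_union; apply: functional_extensionality => x.
by apply: propositional_extensionality; split=> -[y [/Hs Hy Hx]]; exists y.
Qed.

Lemma union_algebra_prolong (Hpl : plural ar) X Sigma :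
  model (prolong Sigma) (union_algebra X).
Proof.
move=> _ [s [_ [m [_ [r [Hr ->]]]]]] e /=.
suff eval_r u : eval e (subst r u) = (fun x => exists z, z < m /\ e z x) by rewrite !eval_r.
rewrite eval_subst eval_union; apply: functional_extensionality => x.
apply: propositional_extensionality; have [y0 Hy0] := occurs_nonempty Hpl u.
split=> [[y [_]]|[z [Hz Hx]]].
  by rewrite eval_union => -[z [Hz Hx]]; exists z; split; first exact: (Hr y).1.
by exists y0; split=> //; rewrite eval_union; exists z; split; first exact: (Hr y0).2.
Qed.

Lemma kernel_congruence A B (h : A -> B) : hom h -> congruence (fun a b => h a = h b).
Proof.
move=> hh; do 3!split=> //; first by move=> ? ? ? -> ->.
by move=> o a b Hab; rewrite !hh; congr op; apply: functional_extensionality.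
Qed.

Lemma replica_sub_kernel A B (rho : A -> A -> Prop) (h : A -> B) :
  semilattice_replica rho -> hom h -> (forall s, regular s -> satisfies B s) ->
  forall a b, rho a b -> h a = h b.
Proof.
move=> [_ [_ rho_min]] hh B_reg; apply: rho_min; first exact: kernel_congruence.
by move=> s Hs e /=; rewrite !eval_hom //; exact: B_reg.
Qed.

Section Generation.
Variables (X : Type) (A : algebra ar) (eta : X -> A).

Definition generated (a : A) : Prop := exists u : term ar X, a = eval eta u.

Definition generated_op o (f : 'I_(ar o) -> {a : A | generated a}) : {a : A | generated a}.
Proof.
exists (op (fun i => sval (f i))).
exists (Op (fun i => sval (constructive_indefinite_description _ (svalP (f i))))).
congr op; apply: functional_extensionality => i /=.
by case: constructive_indefinite_description.
Defined.

Definition generated_subalgebra : algebra ar := @Algebra _ ar _ generated_op.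

Lemma eval_generated V (e : V -> generated_subalgebra) u :
  sval (eval e u) = eval (fun y => sval (e y)) u.
Proof.
elim: u => [v|o f IH] //=; congr op; apply: functional_extensionality => i; exact: IH.
Qed.

(* The inclusion of the generated subalgebra, composed with the induced map
   onto it, is the identity of [A] by uniqueness of homomorphic extensions. *)
Lemma free_generated Sigma : free_over Sigma eta -> forall a : A, generated a.
Proof.
move=> [A_model A_free].
have sub_model : model Sigma generated_subalgebra.
  move=> s Hs e; apply: eq_sig_hprop; first by move=> a p q; exact: proof_irrelevance.
  by rewrite !eval_generated; apply: A_model.
have [h [hh [h_eta _]]] :=
  A_free _ sub_model (fun x => exist generated (eta x) (ex_intro _ (Var ar x) erefl)).
have [g [_ [_ unique]]] := A_free _ A_model eta.
move=> a; have -> : a = sval (h a).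
  transitivity (g a); first exact: (unique id (fun o b => erefl) (fun x => erefl)).
  by apply: esym; apply: (unique (fun b => sval (h b))) => [o b|x]; rewrite ?hh ?h_eta.
exact: svalP.
Qed.

Lemma free_content Sigma (Hpl : plural ar) : free_over (prolong Sigma) eta ->
  exists c : A -> union_algebra X, hom c /\
    forall u, c (eval eta u) = (fun x => occurs x u).
Proof.
move=> [_ A_free].
have [c [hc [c_eta _]]] := A_free _ (@union_algebra_prolong Hpl X Sigma) (fun x y => x = y).
exists c; split=> // u; rewrite eval_hom // eval_union.
apply: functional_extensionality => x; apply: propositional_extensionality.
by split=> [[y [Hy]]|Hx]; [rewrite c_eta => <- | exists x; rewrite c_eta].
Qed.

Lemma replica_occurs Sigma (Hpl : plural ar) (rho : A -> A -> Prop) :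
  free_over (prolong Sigma) eta -> semilattice_replica rho ->
  forall u v, rho (eval eta u) (eval eta v) -> forall x, occurs x u <-> occurs x v.
Proof.
move=> A_free Hrho u v /(replica_sub_kernel Hrho).
have [c [hc c_eval]] := free_content Hpl A_free.
move=> /(_ _ c hc (@union_algebra_regular X)); rewrite !c_eval => E x.
by have /= -> := congr1 (fun P => P x) E.
Qed.

End Generation.

Fixpoint vars X (u : term ar X) : seq (classical X) :=
  match u with
  | Var x => [:: (x : classical X)]
  | Op o f => flatten [seq vars (f i) | i <- enum 'I_(ar o)]
  end.

Lemma occurs_vars X (u : term ar X) (x : classical X) : occurs x u <-> x \in vars u.
Proof.
elim: u => [v|o f IH] /=; first by rewrite inE; split=> [->|/eqP].
split=> [[i /IH Hi]|/flattenP [s /mapP [i _ ->] /IH Hi]]; last by exists i.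
by apply/flattenP; exists (vars (f i)) => //; apply/mapP; exists i; rewrite ?mem_enum.
Qed.

(* Renumber the variables of [u] as [x_0, ..., x_(m-1)]; every [w n] then
   becomes a term of [T_m], so the prolonged identity applies. *)
Lemma prolong_same_occurs (Hpl : plural ar) Sigma X A (e : X -> A) s :
  model (prolong Sigma) A -> Sigma s ->
  forall (u : term ar X) (w : nat -> term ar X),
    (forall n x, occurs x u <-> occurs x (w n)) ->
    eval (fun n => eval e (w n)) s.1 = eval (fun n => eval e (w n)) s.2.
Proof.
move=> A_model Hs u w Hw; have [x0 Hx0] := occurs_nonempty Hpl u.
set l := undup (vars u).
have in_l x : occurs x u <-> (x : classical X) \in l by rewrite mem_undup; apply: occurs_vars.
pose rename (x : X) := Var ar (index (x : classical X) l).
pose e' n := e (nth (x0 : classical X) l n).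
have w_in_T n : in_T (size l) (subst rename (w n)).
  split=> [k /occurs_subst [y [Hy ->]]|k Hk]; first by rewrite index_mem; apply/in_l/Hw/Hy.
  apply/occurs_subst; exists (nth (x0 : classical X) l k).
  by split; [apply/Hw/in_l; exact: mem_nth | rewrite /= index_uniq // undup_uniq].
have eval_rename n : eval e' (subst rename (w n)) = eval e (w n).
  rewrite eval_subst; apply: eq_eval => x /Hw/in_l Hx.
  by rewrite /= /e' nth_index.
have l_pos : 0 < size l.
  by rewrite -has_predT; apply/hasP; exists (x0 : classical X) => //; apply/in_l.
have s_prolonged : prolong Sigma (subst (fun n => subst rename (w n)) s.1,
                                  subst (fun n => subst rename (w n)) s.2).
  by exists s; split=> //; exists (size l); split=> //; exists (fun n => subst rename (w n)).
have := A_model _ s_prolonged e'; rewrite /= !eval_subst.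
by have -> : (fun n => eval e' (subst rename (w n))) = (fun n => eval e (w n))
  by apply: functional_extensionality => n; exact: eval_rename.
Qed.

Lemma prolong_absorb (Hpl : plural ar) Sigma (t : term ar nat) X A (e : X -> A) :
  model (prolong Sigma) A -> Sigma (t, Var ar 0) ->
  forall u v : term ar X, (forall x, occurs x u <-> occurs x v) ->
    eval (pair_env (eval e u) (eval e v)) t = eval e u.
Proof.
move=> A_model Ht u v Huv.
have := prolong_same_occurs Hpl e A_model Ht (u := u) (w := pair_env u v).
have -> : (fun n => eval e (pair_env u v n)) = pair_env (eval e u) (eval e v).
  by apply: functional_extensionality => -[|n].
by apply=> -[|n] x; [exact: iff_refl | exact: Huv].
Qed.

Definition op_compatible A (R : A -> A -> Prop) : Prop :=
  forall o (a b : 'I_(ar o) -> A), (forall i, R (a i) (b i)) -> R (op a) (op b).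

Section ThreeFoldProduct.
Variables (A : algebra ar) (theta rho : A -> A -> Prop).
Hypotheses (Htheta : congruence theta) (Hrho : congruence rho).

Lemma rel_comp_op (R S : A -> A -> Prop) :
  op_compatible R -> op_compatible S -> op_compatible (rel_comp R S).
Proof.
move=> R_op S_op o a b Hab; pose c i := constructive_indefinite_description _ (Hab i).
by exists (op (fun i => sval (c i))); split; [apply: R_op | apply: S_op] => i;
  case: (svalP (c i)).
Qed.

Lemma rel_comp3_congruence :
  (forall x y z, rel_comp theta (rel_comp rho theta) x y ->
     rel_comp theta (rel_comp rho theta) y z -> rel_comp theta (rel_comp rho theta) x z) ->
  congruence (rel_comp theta (rel_comp rho theta)).
Proof.
have [th_r [th_s [_ th_op]]] := Htheta; have [rh_r [rh_s [_ rh_op]]] := Hrho.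
move=> comp3_trans; split; first by move=> a; exists a; split=> //; exists a.
split; first by move=> a b [p [? [q [? ?]]]]; exists q; split; auto; exists p; split; auto.
by split=> //; apply: rel_comp_op th_op (rel_comp_op rh_op th_op).
Qed.

Lemma cong_join_rel_comp3 :
  congruence (rel_comp theta (rel_comp rho theta)) ->
  forall x y, cong_join theta rho x y <-> rel_comp theta (rel_comp rho theta) x y.
Proof.
have [th_r _] := Htheta; have [rh_r _] := Hrho.
move=> comp3_cong x y; split.
  apply; first exact: comp3_cong.
    by move=> a b Hab; exists b; split=> //; exists b.
  by move=> a b Hab; exists a; split=> //; exists b.
move=> [p [Hxp [q [Hpq Hqy]]]] phi [_ [_ [phi_trans _]]] th_phi rh_phi.
by apply: phi_trans (th_phi _ _ Hxp) (phi_trans _ _ _ (rh_phi _ _ Hpq) (th_phi _ _ Hqy)).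
Qed.

Variable T : A -> A -> A.
Hypotheses
  (T_theta : forall a b a' b', theta a a' -> theta b b' -> theta (T a b) (T a' b'))
  (T_rho : forall a b a' b', rho a a' -> rho b b' -> rho (T a b) (T a' b'))
  (T_absorb : forall a b, rho a b -> T a b = a)
  (T_comm : forall a b, rho (T a b) (T b a)).

Lemma rel_comp3_trans x y z :
  rel_comp theta (rel_comp rho theta) x y -> rel_comp theta (rel_comp rho theta) y z ->
  rel_comp theta (rel_comp rho theta) x z.
Proof.
have [th_r [th_s [th_t _]]] := Htheta; have [_ [rh_s [rh_t _]]] := Hrho.
move=> [p [Hxp [q [Hpq Hqy]]]] [p' [Hyp' [q' [Hp'q' Hq'z]]]].
have Hqp' := th_t _ _ _ Hqy Hyp'.
exists (T p p'); split.
  by apply: th_t Hxp _; rewrite -[X in theta X _](T_absorb Hpq); apply: T_theta.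
exists (T q' q); split; first exact: rh_t (T_rho Hpq Hp'q') (T_comm q q').
apply: th_t _ Hq'z; rewrite -[X in theta _ X](T_absorb (rh_s _ _ Hp'q')).
exact: T_theta (th_r q') Hqp'.
Qed.

End ThreeFoldProduct.

End UniversalAlgebra.

Theorem lemma4p4 (Om : Type) (ar : Om -> nat) (Hpl : plural ar)
  (t : term ar nat) (Ht : in_T 2 t)
  (X : Type) (A : algebra ar) (eta : X -> A)
  (HA : @free_over Om ar (prolong (Id (fun s => s = (t, @Var Om ar nat 0)))) X A eta)
  (rho : A -> A -> Prop) (Hrho : semilattice_replica rho)
  (theta : A -> A -> Prop) (Htheta : congruence theta) :
  forall x y : A,
    cong_join theta rho x y <-> rel_comp theta (rel_comp rho theta) x y.
Proof.
have rho_cong := Hrho.1; have rho_S := Hrho.2.1.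
pose T (a b : A) := eval (pair_env a b) t.
have T_cong th : congruence th -> forall a b a' b', th a a' -> th b b' -> th (T a b) (T a' b').
  by move=> th_cong a b a' b' Ha Hb; apply: eval_congruence => // -[|n].
have T_absorb a b : rho a b -> T a b = a.
  have [u ->] := free_generated HA a; have [v ->] := free_generated HA b.
  move=> /(replica_occurs Hpl HA Hrho) Huv.
  by apply: (prolong_absorb Hpl eta HA.1) => // B; apply.
have T_comm a b : rho (T a b) (T b a).
  have := rho_S _ (regular_swap2 Ht) (pair_env a b); rewrite /= eval_subst.
  by have -> : (fun y => eval (pair_env a b) (pair_env (Var ar 1) (Var ar 0) y)) = pair_env b a
    by apply: functional_extensionality => -[|n].
apply: cong_join_rel_comp3 => //; apply: rel_comp3_congruence => //.
exact (rel_comp3_trans Htheta rho_cong (T_cong _ Htheta) (T_cong _ rho_cong) T_absorb T_comm).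
Qed.
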